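(* Let $G$ be a group and $k\in\mathbb{N}$, and suppose $[\overline{G}_k:\overline{G}_{k+1}]<\infty$. Then $\bigcap_{i=1}^\infty\overline{G}_i=\overline{G}_k$.
   Context: The lower central series is $G_1=G$, $G_{i+1}=[G,G_i]$, where $[x,y]=x^{-1}y^{-1}xy$ and $[A,B]=\langle[a,b]:a\in A,b\in B\rangle$. The generalised commutator subgroups are $\overline{G}_k=\{g\in G:\exists n\in\mathbb{N},\ g^n\in G_k\}$ (these are subgroups, decreasing in $k$). *)

From Stdlib Require Import List Arith.

Record Group := {
  carrier :> Type;
  gmul : carrier -> carrier -> carrier;
  gone : carrier;
  ginv : carrier -> carrier;
  gmul_assoc : forall x y z, gmul x (gmul y z) = gmul (gmul x y) z;
  gmul_1l : forall x, gmul gone x = x;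
  gmul_Vl : forall x, gmul (ginv x) x = gone
}.

Arguments gmul {g}.
Arguments gone {g}.
Arguments ginv {g}.

Definition comm {G : Group} (x y : G) : G :=
  gmul (ginv x) (gmul (ginv y) (gmul x y)).

Fixpoint gpow {G : Group} (g : G) (n : nat) : G :=
  match n with 0 => gone | S m => gmul g (gpow g m) end.

Inductive gen {G : Group} (S : G -> Prop) : G -> Prop :=
| gen_base : forall x, S x -> gen S x
| gen_one : gen S gone
| gen_mul : forall x y, gen S x -> gen S y -> gen S (gmul x y)
| gen_inv : forall x, gen S x -> gen S (ginv x).

Definition commsub {G : Group} (A B : G -> Prop) : G -> Prop :=
  gen (fun g => exists a b, A a /\ B b /\ g = comm a b).

(* Lower central series, indexed from 1: lcs 1 = G, lcs (i+1) = [G, lcs i].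
   (lcs 0 is also set to G, a harmless convention; only i >= 1 is used.) *)
Fixpoint lcs (G : Group) (n : nat) : G -> Prop :=
  match n with
  | 0 => fun _ => True
  | 1 => fun _ => True
  | S m => commsub (fun _ => True) (lcs G m)
  end.

Definition glcs (G : Group) (k : nat) : G -> Prop :=
  fun g => exists n, 1 <= n /\ lcs G k (gpow g n).

(* For B <= A, [A : B] < oo: A is covered by finitely many left cosets
   x B with x in A. *)
Definition finite_index {G : Group} (A B : G -> Prop) : Prop :=
  exists l : list G, (forall x, In x l -> A x) /\
    forall a, A a -> exists x, In x l /\ B (gmul (ginv x) a).

(* Elements c of G_k (k >= 1) are central modulo G_{k+1}, so (u c)^n and
   u^n c^n agree modulo G_{k+1}; hence if u and u c both have a power in
   G_{k+1}, so does c.  Finite index puts two powers g^i, g^j (i < j) of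
   g in G_k into one coset x (G_{k+1})-bar, and u = x^-1 g^i, c = g^(j-i) show
   that G_k / G_{k+1} is torsion.  Torsion propagates down the series, since
   [a, b]^n = [a, b^n] modulo G_{j+2} and G_{j+1} / G_{j+2} is abelian and
   generated by the classes of the [a, b] with b in G_j.  So every element of
   (G_k)-bar has a power in every G_i. *)
From Stdlib Require Import List Arith Lia Permutation.

Section GroupLaws.
Context {G : Group}.
Implicit Types x y z : G.

Lemma mul1g x : gmul gone x = x.
Proof. apply gmul_1l. Qed.

Lemma mulVg x : gmul (ginv x) x = gone.
Proof. apply gmul_Vl. Qed.

Lemma mulgA x y z : gmul (gmul x y) z = gmul x (gmul y z).
Proof. symmetry; apply gmul_assoc. Qed.

Lemma mulKg x z : gmul (ginv x) (gmul x z) = z.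
Proof. rewrite gmul_assoc, mulVg, mul1g; reflexivity. Qed.

Lemma mulgV x : gmul x (ginv x) = gone.
Proof.
  rewrite <- (mul1g (gmul x (ginv x))), <- (mulVg (ginv x)) at 1.
  rewrite mulgA, (gmul_assoc _ (ginv x) x), mulVg, mul1g, mulVg; reflexivity.
Qed.

Lemma mulg1 x : gmul x gone = x.
Proof. rewrite <- (mulVg x), gmul_assoc, mulgV, mul1g; reflexivity. Qed.

Lemma mulKVg x z : gmul x (gmul (ginv x) z) = z.
Proof. rewrite gmul_assoc, mulgV, mul1g; reflexivity. Qed.

Lemma invg_unique x y : gmul x y = gone -> ginv x = y.
Proof. intro H. rewrite <- (mulg1 (ginv x)), <- H, mulKg; reflexivity. Qed.

Lemma invgK x : ginv (ginv x) = x.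
Proof. apply invg_unique, mulVg. Qed.

Lemma invg1 : ginv (@gone G) = gone.
Proof. apply invg_unique, mul1g. Qed.

Lemma invMg x y : ginv (gmul x y) = gmul (ginv y) (ginv x).
Proof. apply invg_unique. rewrite mulgA, mulKVg, mulgV; reflexivity. Qed.

End GroupLaws.

Create HintDb gsimpl.
#[export] Hint Rewrite @mulgA @mul1g @mulg1 @mulVg @mulgV @mulKg @mulKVg
  @invgK @invg1 @invMg : gsimpl.

Ltac gsimpl :=
  unfold comm; autorewrite with gsimpl; try reflexivity; try (intro; assumption).

Section Powers.
Context {G : Group}.

Lemma gpowD (g : G) a b : gpow g (a + b) = gmul (gpow g a) (gpow g b).
Proof. induction a; simpl; [|rewrite IHa]; gsimpl. Qed.

Lemma gpowM (g : G) a b : gpow (gpow g a) b = gpow g (a * b).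
Proof.
  induction b; simpl.
  - rewrite Nat.mul_0_r; reflexivity.
  - rewrite IHb, Nat.mul_succ_r, Nat.add_comm, gpowD; reflexivity.
Qed.

Lemma gpow_commute (g : G) n : gmul g (gpow g n) = gmul (gpow g n) g.
Proof.
  change (gmul g (gpow g n)) with (gpow g (1 + n)).
  rewrite Nat.add_comm, gpowD; simpl; gsimpl.
Qed.

Lemma gpowV (g : G) n : gpow (ginv g) n = ginv (gpow g n).
Proof. induction n; simpl; [|rewrite IHn, gpow_commute]; gsimpl. Qed.

Lemma gpow1 (g : G) : gpow g 1 = g.
Proof. simpl; gsimpl. Qed.

End Powers.

Lemma pigeonhole_seq {A : Type} (l : list A) (R : nat -> A -> Prop) :
  (forall i, i <= length l -> exists x, In x l /\ R i x) ->
  exists i j x, i < j /\ R i x /\ R j x.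
Proof.
  intro Hl.
  destruct (@Permutation_pigeonhole_rel _ _ R (seq 0 (S (length l))) l)
    as [i [j [r [Hperm [x [_ [Hi Hj]]]]]]].
  - apply Forall_forall; intros i Hi%in_seq.
    destruct (Hl i ltac:(lia)) as [x Hx]; apply Exists_exists; eauto.
  - rewrite length_seq; lia.
  - assert (Hij : i <> j).
    { intros <-.
      pose proof (Permutation_NoDup Hperm (seq_NoDup _ _)) as [Hnot _]%NoDup_cons_iff.
      apply Hnot; left; reflexivity. }
    destruct (Nat.lt_total i j) as [Hlt|[Heq|Hgt]]; [|contradiction|].
    + exists i, j, x; auto.
    + exists j, i, x; auto.
Qed.

Record normal {G : Group} (N : G -> Prop) : Prop := {
  normal1 : N gone;
  normalM : forall x y, N x -> N y -> N (gmul x y);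
  normalV : forall x, N x -> N (ginv x);
  normalJ : forall x h, N h -> N (gmul (ginv x) (gmul h x))
}.

Section ModuloNormal.
Context {G : Group} (N : G -> Prop) (HN : normal N).
Implicit Types x y u c : G.

Definition congr_mod x y := N (gmul (ginv x) y).

Definition central_mod c := forall y, N (comm y c).

Definition has_power_in x := exists n, 1 <= n /\ N (gpow x n).

Lemma normal_pow x n : N x -> N (gpow x n).
Proof.
  intro Hx; induction n; simpl; [apply (normal1 _ HN)|apply (normalM _ HN); auto].
Qed.

Lemma congr_mod_eq x y : x = y -> congr_mod x y.
Proof. intros ->; unfold congr_mod; rewrite mulVg; apply (normal1 _ HN). Qed.

Lemma congr_mod_sym x y : congr_mod x y -> congr_mod y x.
Proof. unfold congr_mod; intro H; apply (normalV _ HN) in H; revert H; gsimpl. Qed.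

Lemma congr_mod_trans x y z : congr_mod x y -> congr_mod y z -> congr_mod x z.
Proof.
  unfold congr_mod; intros H1 H2.
  generalize (normalM _ HN _ _ H1 H2); gsimpl.
Qed.

Lemma congr_mod_mul x y x' y' :
  congr_mod x y -> congr_mod x' y' -> congr_mod (gmul x x') (gmul y y').
Proof.
  unfold congr_mod; intros H1 H2.
  generalize (normalM _ HN _ _ (normalJ _ HN x' _ H1) H2); gsimpl.
Qed.

Lemma congr_mod_mem x y : congr_mod x y -> N x -> N y.
Proof.
  unfold congr_mod; intros Hxy Hx.
  generalize (normalM _ HN _ _ Hx Hxy); gsimpl.
Qed.

Lemma central_mod_commute c y : central_mod c -> congr_mod (gmul c y) (gmul y c).
Proof. intro Hc; generalize (Hc y); unfold congr_mod; gsimpl. Qed.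

Lemma central_mod_conj c t : central_mod t -> congr_mod (gmul (ginv c) (gmul t c)) t.
Proof.
  intro Ht. apply (congr_mod_trans _ (gmul (ginv c) (gmul c t))).
  - apply congr_mod_mul; [apply congr_mod_eq; reflexivity|apply central_mod_commute, Ht].
  - apply congr_mod_eq; gsimpl.
Qed.

Lemma central_modM a b : central_mod a -> central_mod b -> central_mod (gmul a b).
Proof.
  intros Ha Hb y.
  replace (comm y (gmul a b))
    with (gmul (comm y b) (gmul (ginv b) (gmul (comm y a) b))) by gsimpl.
  apply (normalM _ HN); [apply Hb|apply (normalJ _ HN), Ha].
Qed.

Lemma central_mod_pow c n : central_mod c -> central_mod (gpow c n).
Proof.
  intro Hc; induction n; simpl.
  - intro y. replace (comm y gone) with (@gone G) by gsimpl. apply (normal1 _ HN).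
  - apply central_modM; assumption.
Qed.

Lemma congr_mod_pow_mul c u n :
  central_mod c -> congr_mod (gpow (gmul u c) n) (gmul (gpow u n) (gpow c n)).
Proof.
  intro Hc; induction n; simpl.
  - apply congr_mod_eq; gsimpl.
  - apply (congr_mod_trans _ (gmul (gmul u c) (gmul (gpow u n) (gpow c n)))).
    { apply congr_mod_mul; [apply congr_mod_eq; reflexivity|exact IHn]. }
    replace (gmul (gmul u c) (gmul (gpow u n) (gpow c n)))
      with (gmul u (gmul (gmul c (gpow u n)) (gpow c n))) by gsimpl.
    replace (gmul (gmul u (gpow u n)) (gmul c (gpow c n)))
      with (gmul u (gmul (gmul (gpow u n) c) (gpow c n))) by gsimpl.
    apply congr_mod_mul; [apply congr_mod_eq; reflexivity|].
    apply congr_mod_mul; [apply central_mod_commute, Hc|apply congr_mod_eq; reflexivity].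
Qed.

(* From [a, b c] = [a, c] * c^-1 [a, b] c. *)
Lemma congr_mod_comm_pow a b n :
  central_mod (comm a b) -> congr_mod (gpow (comm a b) n) (comm a (gpow b n)).
Proof.
  intro Hab; induction n; simpl.
  - apply congr_mod_eq; gsimpl.
  - apply (congr_mod_trans _ (gmul (comm a (gpow b n)) (comm a b))).
    { apply (congr_mod_trans _ (gmul (comm a b) (comm a (gpow b n)))).
      - apply congr_mod_mul; [apply congr_mod_eq; reflexivity|exact IHn].
      - apply central_mod_commute, Hab. }
    apply (congr_mod_trans _ (gmul (comm a (gpow b n))
                                  (gmul (ginv (gpow b n)) (gmul (comm a b) (gpow b n))))).
    + apply congr_mod_mul; [apply congr_mod_eq; reflexivity|].
      apply congr_mod_sym, central_mod_conj, Hab.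
    + apply congr_mod_eq; gsimpl.
Qed.

Lemma has_power_in_mem x : N x -> has_power_in x.
Proof. intro Hx; exists 1; rewrite gpow1; auto. Qed.

Lemma has_power_inV x : has_power_in x -> has_power_in (ginv x).
Proof.
  intros [n [Hn Hx]]; exists n; split; [exact Hn|].
  rewrite gpowV; apply (normalV _ HN), Hx.
Qed.

Lemma has_power_in_pow x n : 1 <= n -> has_power_in (gpow x n) -> has_power_in x.
Proof.
  intros Hn [m [Hm Hxm]]; exists (n * m); split; [nia|].
  rewrite <- gpowM; exact Hxm.
Qed.

Lemma has_power_inM_central x y : central_mod y ->
  has_power_in x -> has_power_in y -> has_power_in (gmul x y).
Proof.
  intros Hy [p [Hp Hxp]] [q [Hq Hyq]]; exists (p * q); split; [nia|].
  apply (congr_mod_mem _ _ (congr_mod_sym _ _ (congr_mod_pow_mul y x (p * q) Hy))).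
  apply (normalM _ HN).
  - rewrite <- gpowM; apply normal_pow, Hxp.
  - rewrite Nat.mul_comm, <- gpowM; apply normal_pow, Hyq.
Qed.

Lemma has_power_in_central_cancel u c : central_mod c ->
  has_power_in u -> has_power_in (gmul u c) -> has_power_in c.
Proof.
  intros Hc [p [Hp Hup]] [q [Hq Hucq]]; exists (p * q); split; [nia|].
  assert (Hu : N (gpow u (p * q))) by (rewrite <- gpowM; apply normal_pow, Hup).
  assert (Huc : N (gpow (gmul u c) (p * q)))
    by (rewrite Nat.mul_comm, <- gpowM; apply normal_pow, Hucq).
  generalize (normalM _ HN _ _ (normalV _ HN _ Hu)
                (congr_mod_mem _ _ (congr_mod_pow_mul c u (p * q) Hc) Huc)).
  gsimpl.
Qed.

Lemma has_power_in_gen (S : G -> Prop) :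
  (forall s, S s -> has_power_in s) -> (forall x, gen S x -> central_mod x) ->
  forall x, gen S x -> has_power_in x.
Proof.
  intros HS Hcent x Hx; induction Hx as [s Hs| |x y Hx IHx Hy IHy|x Hx IHx].
  - apply HS, Hs.
  - apply has_power_in_mem, (normal1 _ HN).
  - apply has_power_inM_central; auto.
  - apply has_power_inV, IHx.
Qed.

Lemma has_power_in_of_cosets (l : list G) g : central_mod g ->
  (forall i, exists x, In x l /\ has_power_in (gmul (ginv x) (gpow g (S i)))) ->
  has_power_in g.
Proof.
  intros Hg Hl.
  destruct (pigeonhole_seq l (fun i x => has_power_in (gmul (ginv x) (gpow g (S i)))))
    as [i [j [x [Hij [Hi Hj]]]]]; [intros i _; apply Hl|].
  replace (gpow g (S j)) with (gmul (gpow g (S i)) (gpow g (j - i))) in Hj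
    by (rewrite <- gpowD; f_equal; lia).
  rewrite <- mulgA in Hj.
  apply (has_power_in_pow _ (j - i)); [lia|].
  exact (has_power_in_central_cancel _ _ (central_mod_pow g _ Hg) Hi Hj).
Qed.

End ModuloNormal.

Section LowerCentralSeries.
Context (G : Group).

Lemma lcs_SS m : lcs G (S (S m)) = commsub (fun _ => True) (lcs G (S m)).
Proof. reflexivity. Qed.

Lemma lcs_normal m : normal (lcs G m).
Proof.
  induction m as [|[|m] IH]; [constructor; simpl; auto|constructor; simpl; auto|].
  rewrite lcs_SS; constructor; [apply gen_one|apply gen_mul|apply gen_inv|].
  intros x h Hh; induction Hh as [t [a [b [_ [Hb ->]]]]| |y z _ IHy _ IHz|y _ IHy].
  - apply gen_base. exists (gmul (ginv x) (gmul a x)), (gmul (ginv x) (gmul b x)).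
    split; [exact I|split; [apply (normalJ _ IH), Hb|gsimpl]].
  - replace (gmul (ginv x) (gmul gone x)) with (@gone G) by gsimpl. apply gen_one.
  - replace (gmul (ginv x) (gmul (gmul y z) x))
      with (gmul (gmul (ginv x) (gmul y x)) (gmul (ginv x) (gmul z x))) by gsimpl.
    apply gen_mul; assumption.
  - replace (gmul (ginv x) (gmul (ginv y) x))
      with (ginv (gmul (ginv x) (gmul y x))) by gsimpl.
    apply gen_inv; assumption.
Qed.

Lemma lcs_central j c : 1 <= j -> lcs G j c -> central_mod (lcs G (S j)) c.
Proof.
  intros Hj Hc y; destruct j as [|j]; [lia|].
  rewrite lcs_SS; apply gen_base; exists y, c; auto.
Qed.

Lemma lcs_succ_sub m x : lcs G (S m) x -> lcs G m x.
Proof.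
  destruct m as [|m]; [intros; exact I|].
  pose proof (lcs_normal (S m)) as HN.
  rewrite lcs_SS; intro Hx; induction Hx as [t [a [b [_ [Hb ->]]]]| | |].
  - replace (comm a b) with (gmul (gmul (ginv a) (gmul (ginv b) a)) b) by gsimpl.
    apply (normalM _ HN); [apply (normalJ _ HN), (normalV _ HN)|]; exact Hb.
  - apply (normal1 _ HN).
  - apply (normalM _ HN); assumption.
  - apply (normalV _ HN); assumption.
Qed.

Lemma lcs_antitone i j x : i <= j -> lcs G j x -> lcs G i x.
Proof. induction 1; auto using lcs_succ_sub. Qed.

Lemma glcs_antitone i j x : i <= j -> glcs G j x -> glcs G i x.
Proof. intros Hij [n [Hn Hx]]; exists n; eauto using lcs_antitone. Qed.

Lemma lcs_torsion_of_finite_index k : 1 <= k ->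
  finite_index (glcs G k) (glcs G (S k)) ->
  forall g, lcs G k g -> has_power_in (lcs G (S k)) g.
Proof.
  intros Hk [l [_ Hl]] g Hg.
  apply (has_power_in_of_cosets _ (lcs_normal (S k)) l); [apply lcs_central; auto|].
  intro i; apply Hl, has_power_in_mem, normal_pow; [apply lcs_normal|exact Hg].
Qed.

Lemma lcs_torsion_succ j : 1 <= j ->
  (forall g, lcs G j g -> has_power_in (lcs G (S j)) g) ->
  forall g, lcs G (S j) g -> has_power_in (lcs G (S (S j))) g.
Proof.
  intros Hj Htor.
  pose proof (lcs_normal (S (S j))) as HM.
  destruct j as [|j]; [lia|].
  apply (has_power_in_gen _ HM _); [|intros x Hx; apply lcs_central; [lia|exact Hx]].
  intros s [a [b [_ [Hb ->]]]].
  assert (Hab : lcs G (S (S j)) (comm a b))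
    by (rewrite lcs_SS; apply gen_base; exists a, b; auto).
  destruct (Htor b Hb) as [n [Hn Hbn]]; exists n; split; [exact Hn|].
  apply (congr_mod_mem _ HM (comm a (gpow b n))).
  - apply (congr_mod_sym _ HM), (congr_mod_comm_pow _ HM), lcs_central; [lia|exact Hab].
  - rewrite lcs_SS; apply gen_base; exists a, (gpow b n); auto.
Qed.

Lemma lcs_torsion_add k : 1 <= k ->
  (forall g, lcs G k g -> has_power_in (lcs G (S k)) g) ->
  forall d g, lcs G k g -> has_power_in (lcs G (k + d)) g.
Proof.
  intros Hk Htor.
  assert (Hstep : forall d g, lcs G (k + d) g -> has_power_in (lcs G (S (k + d))) g).
  { induction d; [rewrite Nat.add_0_r; exact Htor|].
    rewrite Nat.add_succ_r; apply lcs_torsion_succ; [lia|exact IHd]. }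
  induction d; intros g Hg.
  - rewrite Nat.add_0_r; apply has_power_in_mem, Hg.
  - destruct (IHd g Hg) as [n [Hn Hgn]].
    rewrite Nat.add_succ_r; apply (has_power_in_pow _ g n Hn), Hstep, Hgn.
Qed.

End LowerCentralSeries.

Theorem lemma5p7 (G : Group) (k : nat) (hk : 1 <= k)
  (hfin : finite_index (glcs G k) (glcs G (S k))) :
  forall g : G, (forall i, 1 <= i -> glcs G i g) <-> glcs G k g.
Proof.
  intro g; split; [intro Hg; apply Hg, hk|].
  intros [n [Hn Hgn]] i Hi.
  destruct (le_lt_dec i k) as [Hik|Hki].
  - apply (glcs_antitone G i k g Hik); exists n; auto.
  - replace i with (k + (i - k)) by lia.
    apply (has_power_in_pow _ g n Hn).
    exact (lcs_torsion_add G k hk (lcs_torsion_of_finite_index G k hk hfin) (i - k) _ Hgn).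
Qed.
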